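(* Let $mG$ be a finite canonical misinformation game and let $mG'\in\mathcal{AD}^*(\{mG\})$ satisfy $\mathcal{AD}(\{mG'\})=\{mG'\}$. Then $NME(mG')\subseteq SME(mG)$.
   Context: A normal-form game is $G=\langle N,S,P\rangle$ with finite players $N$, finite pure strategy sets $S_i$, positions $S=\times_i S_i$, payoffs $P_i:S\to\mathbb{R}$. A misinformation game $mG=\langle G^0,G^1,\dots,G^{|N|}\rangle$ consists of the actual game $G^0$ and subjective games $G^i$; it is canonical if all $G^i=\langle N,S,P^i\rangle$ differ from $G^0$ only in payoffs and in every $G^i$ all players have equally many pure strategies. $NME(mG)$ is the set of profiles $\sigma=(\sigma_1,\dots,\sigma_{|N|})$ such that each $\sigma_i$ is player $i$'s component of some Nash equilibrium of $G^i$. $\chi(\sigma)=\mathrm{supp}(\sigma_1)\times\dots\times\mathrm{supp}(\sigma_{|N|})$. For $\vec v\in S$, $mG_{\vec v}$ is obtained by replacing, in every $P^i$ ($i\ge1$), the payoff vector at position $\vec v$ by $P^0(\vec v)$. For a set $M$ of misinformation games, $\mathcal{AD}(M)=\{mG_{\vec u}: mG\in M,\sigma\in NME(mG),\vec u\in\chi(\sigma)\}$, $\mathcal{AD}^{(0)}(M)=M$, $\mathcal{AD}^{(t+1)}(M)=\mathcal{AD}^{(t)}(\mathcal{AD}(M))$, $\mathcal{AD}^*(M)=\bigcup_{t\ge0}\mathcal{AD}^{(t)}(M)$; the length $\mathfrak{L}$ is the least $t\ge0$ with $\mathcal{AD}^{(t+1)}(M)=\mathcal{AD}^{(t)}(M)$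 and $\mathcal{AD}^\infty(M)=\mathcal{AD}^{(\mathfrak{L})}(M)$. A profile $\sigma$ is a stable misinformed equilibrium of $mG$ if there is $\widehat{mG}\in\mathcal{AD}^\infty(\{mG\})$ with $\sigma\in NME(\widehat{mG})$ and $\widehat{mG}_{\vec v}=\widehat{mG}$ for all $\vec v\in\chi(\sigma)$; $SME(mG)$ is the set of these. *)

From HB Require Import structures.
From mathcomp Require Import all_boot all_order all_algebra.
From mathcomp Require Import reals.
Set Implicit Arguments. Unset Strict Implicit. Unset Printing Implicit Defensive.
Import Order.TTheory GRing.Theory Num.Theory.
Local Open Scope ring_scope.

(* A canonical misinformation game: all games G^0,...,G^n share N and S and
   differ only in payoffs, so a game is just its payoff function
   P : S -> R^N  (S = positions), and a misinformation game is a family of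
   payoffs indexed by option 'I_n  (None = actual game G^0, Some i = G^i). *)

Section MisinformationGames.
Variable R : realType.
Variable n : nat.
Variable S : 'I_n -> finType.

Definition position : finType := {dffun forall i : 'I_n, S i}.
Definition payoff := {ffun position -> {ffun 'I_n -> R}}.
Definition mgame := {ffun option 'I_n -> payoff}.

Definition mixed_strategy (i : 'I_n) (x : {ffun S i -> R}) : Prop :=
  (forall a, 0 <= x a) /\ \sum_a x a = 1.
Definition profile := forall i : 'I_n, {ffun S i -> R}.
Definition is_profile (sg : profile) : Prop := forall i, mixed_strategy (sg i).

Definition exp_payoff (P : payoff) (i : 'I_n) (sg : profile) : R :=
  \sum_(s : position) (\prod_(j : 'I_n) sg j (s j)) * P s i.
Definition dev_payoff (P : payoff) (i : 'I_n) (sg : profile)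
    (tau : {ffun S i -> R}) : R :=
  \sum_(s : position) (tau (s i) * \prod_(j | j != i) sg j (s j)) * P s i.
Arguments dev_payoff P i sg tau : clear implicits.

Definition nash (P : payoff) (sg : profile) : Prop :=
  is_profile sg /\
  forall i (tau : {ffun S i -> R}), mixed_strategy tau ->
    dev_payoff P i sg tau <= exp_payoff P i sg.

Definition NME (mg : mgame) (sg : profile) : Prop :=
  forall i : 'I_n, exists tau, nash (mg (Some i)) tau /\ sg i = tau i.

Definition in_chi (sg : profile) (v : position) : Prop :=
  forall i : 'I_n, sg i (v i) != 0.

Definition mg_upd (mg : mgame) (v : position) : mgame :=
  [ffun k : option 'I_n =>
     if k is Some _ then
       [ffun s : position => if s == v then mg None v else mg k s] : payoff
     else mg None].

Definition mgset := mgame -> Prop.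
Definition single (mg : mgame) : mgset := fun g => g = mg.
Definition set_eq (A B : mgset) : Prop := forall g, A g <-> B g.

Definition AD (M : mgset) : mgset := fun g =>
  exists mg sg v, [/\ M mg, NME mg sg, in_chi sg v & g = mg_upd mg v].

Fixpoint ADn (t : nat) (M : mgset) : mgset :=
  match t with
  | O => M
  | t'.+1 => ADn t' (AD M)
  end.

Definition ADstar (M : mgset) : mgset := fun g => exists t, ADn t M g.

Definition is_length (M : mgset) (L : nat) : Prop :=
  set_eq (ADn L.+1 M) (ADn L M) /\
  forall t, (t < L)%N -> ~ set_eq (ADn t.+1 M) (ADn t M).

Definition ADinf (M : mgset) : mgset := fun g =>
  exists L, is_length M L /\ ADn L M g.

Definition SME (mg : mgame) (sg : profile) : Prop :=
  exists mh, [/\ ADinf (single mg) mh, NME mh sg &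
                 forall v, in_chi sg v -> mg_upd mh v = mh].

End MisinformationGames.

(* An update mG_v either leaves mG unchanged or adds v to the set of positions
   at which every subjective payoff already agrees with the actual one.  As
   there are finitely many positions, a game reached after t rounds of AD is
   either reached after fewer rounds or has at least t agreeing positions;
   hence AD^(t) is constant from #|positions| + 1 on, and the length exists.
   A game mG' with AD({mG'}) = {mG'} is its own AD-successor, so once it
   appears in AD^(t) it stays in every later iterate, in particular in
   AD^infinity; and every update of mG' along the support of one of its
   NMEs is mG' itself, which makes those NMEs stable. *)
From HB Require Import structures.
From mathcomp Require Import all_boot all_order all_algebra.
From mathcomp Require Import reals boolp.

Set Implicit Arguments. Unset Strict Implicit. Unset Printing Implicit Defensive.

Section Adjustment.
Variable R : realType.
Variable n : nat.
Variable S : 'I_n -> finType.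

Implicit Types (M : mgset R S) (g h : mgame R S).

Definition agreement_set g : {set position S} :=
  [set v | [forall i, g (Some i) v == g None v]].

Lemma card_agreement_set_le g : (#|agreement_set g| <= #|position S|)%N.
Proof. exact: max_card. Qed.

Lemma agreement_set_upd g v : agreement_set (mg_upd g v) = v |: agreement_set g.
Proof.
apply/setP=> s; rewrite !inE; have [->|nsv] /= := eqVneq s v.
  by apply/forallP=> i; rewrite !ffunE eqxx.
by apply/forallP/forallP=> agree i; move: (agree i); rewrite !ffunE (negbTE nsv).
Qed.

Lemma mg_upd_id_or_agreement_grows g v :
  mg_upd g v = g \/ (#|agreement_set g| < #|agreement_set (mg_upd g v)|)%N.
Proof.
have [v_agree|v_new] := boolP (v \in agreement_set g); last first.
  by right; rewrite agreement_set_upd cardsU1 v_new.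
left; apply/ffunP=> -[i|]; rewrite ffunE //; apply/ffunP=> s; rewrite ffunE.
have [->|//] := eqVneq s v.
by move: v_agree; rewrite inE => /forallP/(_ i)/eqP->.
Qed.

Lemma ADnS t M : ADn t.+1 M = AD (ADn t M).
Proof. by elim: t M => [|t IH] M //=; rewrite -IH. Qed.

Lemma AD_subset M M' : (forall g, M g -> M' g) -> forall g, AD M g -> AD M' g.
Proof.
by move=> sub _ [g [sg [v [Mg ? ? ->]]]]; exists g, sg, v; split=> //; apply: sub.
Qed.

Lemma ADnS_sub_or_agreement t M g :
  ADn t.+1 M g -> ADn t M g \/ (t < #|agreement_set g|)%N.
Proof.
elim: t g => [|t IH] g; rewrite ADnS => -[h [sg [v [ADh NMEh chi_v ->]]]].
  have [->|lt] := mg_upd_id_or_agreement_grows h v; first by left.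
  by right; apply: leq_ltn_trans lt.
have [->|lt] := mg_upd_id_or_agreement_grows h v; first by left.
have [ADh'|le] := IH h ADh; last by right; apply: leq_ltn_trans lt.
by left; rewrite ADnS; exists h, sg, v.
Qed.

Lemma ADn_subS_or_agreement t M g :
  ADn t M g -> ADn t.+1 M g \/ (t <= #|agreement_set g|)%N.
Proof.
elim: t g => [|t IH] g; first by right.
rewrite [ADn t.+1 M]ADnS => -[h [sg [v [ADh NMEh chi_v g_def]]]].
have step : ADn t.+1 M h -> ADn t.+2 M g.
  by move=> ADh'; rewrite ADnS; exists h, sg, v.
have [eq_h|lt] := mg_upd_id_or_agreement_grows h v.
  by left; apply: step; rewrite -[h]eq_h -g_def ADnS; exists h, sg, v.
have [/step|le] := IH h ADh; first by left.
by right; rewrite g_def; apply: leq_ltn_trans lt.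
Qed.

Lemma ADn_stabilizes M :
  set_eq (ADn (#|position S|.+1).+1 M) (ADn #|position S|.+1 M).
Proof.
move=> g; have bound := card_agreement_set_le g.
split=> [/ADnS_sub_or_agreement|/ADn_subS_or_agreement] [//|];
  last by rewrite leqNgt ltnS bound.
by move/ltnW; rewrite leqNgt ltnS bound.
Qed.

Lemma ADn_stable_after M L t :
  set_eq (ADn L.+1 M) (ADn L M) -> (L <= t)%N -> set_eq (ADn t M) (ADn L M).
Proof.
move=> stable /subnKC <-; elim: (t - L)%N => [|m IH] g; first by rewrite addn0.
rewrite addnS ADnS -(stable g) ADnS.
by split; apply: AD_subset => h /IH.
Qed.

Lemma exists_length M : exists L, is_length M L.
Proof.
pose stable L := `[< set_eq (ADn L.+1 M) (ADn L M) >].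
have [L /asboolP stableL minL] := ex_minnP (ex_intro stable _
  (asboolT (ADn_stabilizes M))).
exists L; split=> // t ltL /asboolP stable_t.
by have := minL t stable_t; rewrite leqNgt ltL.
Qed.

Lemma ADn_persists M g t u :
  AD (single g) g -> ADn t M g -> (t <= u)%N -> ADn u M g.
Proof.
move=> self ADg /subnKC <-; elim: (u - t)%N => [|m IH]; first by rewrite addn0.
by rewrite addnS ADnS; apply: AD_subset self => _ ->.
Qed.

End Adjustment.

Theorem proposition14 (R : realType) (n : nat) (S : 'I_n -> finType)
    (mg mg' : mgame R S) :
  ADstar (single mg) mg' ->
  set_eq (AD (single mg')) (single mg') ->
  forall sg : profile R S, NME mg' sg -> SME mg sg.
Proof.
move=> [t ADt] fixed sg NMEsg.
have [L lengthL] := exists_length (single mg).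
have self : AD (single mg') mg' by apply/fixed.
exists mg'; split=> //; last by move=> v chi_v; apply/fixed; exists mg', sg, v.
exists L; split; first exact: lengthL.
apply/(ADn_stable_after lengthL.1 (leq_maxl L t)).
exact: ADn_persists self ADt (leq_maxr L t).
Qed.
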